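(* For a parameter vector $p=(b,\beta,\beta_1,\gamma,\varepsilon_1,\varepsilon_2,\lambda,\alpha)$ consider the planar system $$s'=b+\gamma+(\varepsilon_2-b-\beta-\gamma)s-\gamma i-\varepsilon_2 s^2+(\varepsilon_1-\varepsilon_2-\lambda)is,$$ $$i'=\beta_1 s+(\varepsilon_2-\varepsilon_1-\alpha-b)i+(\lambda-\varepsilon_2)is+(\varepsilon_1-\varepsilon_2)i^2$$ on $D_1=\{(s,i): s\ge0,\ i\ge0,\ s+i\le1\}$. Let $\Omega\subset\mathbb{R}^8_+$ be the open set of admissible parameter values (all parameters positive and $\beta_2=\beta-\beta_1>0$), and let $\Omega_1\subset\Omega$ be the set of parameter values for which this system has a nonhyperbolic rest point in $D_1$. Then $\Omega_1$ is a closed, nonempty subset of $\Omega$ of Lebesgue measure zero.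
   Context: A rest point is hyperbolic if all eigenvalues of the linearization there have nonzero real parts. The system is the reduction, via $r=1-s-i$, of the SIRS proportions system with birth rate $b$, disease transfer rate $\beta=\beta_1+\beta_2$, recovery rate $\gamma$, excess death rates $\varepsilon_1,\varepsilon_2$, contact rate $\lambda$ and removal rate $\alpha$. *)

From HB Require Import structures.
From mathcomp Require Import all_boot all_order all_algebra.
From mathcomp Require Import all_classical all_reals.
From mathcomp Require Import topology normedtype derive.
From mathcomp Require Import complex.

Set Implicit Arguments.
Unset Strict Implicit.
Unset Printing Implicit Defensive.

Import Order.TTheory GRing.Theory Num.Theory.
Import numFieldNormedType.Exports.

Local Open Scope classical_set_scope.
Local Open Scope ring_scope.

Section SIRS.
Variable R : realType.

Definition prm (p : 'rV[R]_8) (k : nat) : R := p 0 (inord k).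
Definition pb      p := prm p 0.
Definition pbeta   p := prm p 1.
Definition pbeta1  p := prm p 2.
Definition pgamma  p := prm p 3.
Definition peps1   p := prm p 4.
Definition peps2   p := prm p 5.
Definition plambda p := prm p 6.
Definition palpha  p := prm p 7.

Definition fs (p : 'rV[R]_8) (s i : R) : R :=
  pb p + pgamma p + (peps2 p - pb p - pbeta p - pgamma p) * s
  - pgamma p * i - peps2 p * s ^+ 2
  + (peps1 p - peps2 p - plambda p) * i * s.

Definition fi (p : 'rV[R]_8) (s i : R) : R :=
  pbeta1 p * s + (peps2 p - peps1 p - palpha p - pb p) * i
  + (plambda p - peps2 p) * i * s + (peps1 p - peps2 p) * i ^+ 2.

Definition vf (p : 'rV[R]_8) (a : 'I_2) (s i : R) : R :=
  if a == 0 then fs p s i else fi p s i.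

Definition D1 : set (R * R) := [set x | 0 <= x.1 /\ 0 <= x.2 /\ x.1 + x.2 <= 1].

Definition jac (p : 'rV[R]_8) (s i : R) : 'M[R]_2 :=
  \matrix_(a < 2, b < 2)
    (if b == 0 then derive1 (fun t => vf p a t i) s
               else derive1 (fun t => vf p a s t) i).

Definition rest_point (p : 'rV[R]_8) (s i : R) : Prop :=
  fs p s i = 0 /\ fi p s i = 0.

Definition hyperbolic (p : 'rV[R]_8) (s i : R) : Prop :=
  forall z : R[i], eigenvalue (map_mx (fun x : R => (x%:C)%C) (jac p s i)) z ->
    Re z != 0.

Definition Omega : set 'rV[R]_8 :=
  [set p : 'rV[R]_8 | (forall k : 'I_8, 0 < p 0 k) /\ 0 < pbeta p - pbeta1 p].

Definition Omega1 : set 'rV[R]_8 :=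
  [set p : 'rV[R]_8 | Omega p /\
     exists s i, D1 (s, i) /\ rest_point p s i /\ ~ hyperbolic p s i].

Definition rel_closed (Y A : set 'rV[R]_8) : Prop :=
  A `<=` Y /\ exists C : set 'rV[R]_8, closed C /\ A = Y `&` C.

Definition box (a c : 'rV[R]_8) : set 'rV[R]_8 :=
  [set x : 'rV[R]_8 | forall j : 'I_8, a 0 j <= x 0 j <= c 0 j].

Definition lebesgue_null (A : set 'rV[R]_8) : Prop :=
  forall eps : R, 0 < eps ->
    exists a c : nat -> 'rV[R]_8,
      (forall k (j : 'I_8), a k 0 j <= c k 0 j) /\
      A `<=` \bigcup_k box (a k) (c k) /\
      (forall N : nat, \sum_(k < N) \prod_(j < 8) (c k 0 j - a k 0 j) <= eps).

End SIRS.

(* The eigenvalues of the 2x2 linearization are the roots of z^2 - tr z + det, so a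
   rest point is nonhyperbolic iff det = 0, or tr = 0 and det >= 0.  Hence Omega1 is the
   trace on Omega of the projection of a closed set of pairs (parameter, rest point);
   projecting along the compact triangle D1 keeps it closed.  A rest point in D1 has
   s, i > 0, so the equations s' = i' = 0 determine beta and alpha, and there the
   nonhyperbolicity condition is affine in eps1: it determines eps1, or lambda when the
   coefficient of eps1 vanishes.  Thus Omega1 is covered by countably many images of
   bounded 7-dimensional boxes under Lipschitz maps into R^8, and such images are null. *)

From HB Require Import structures.
From mathcomp Require Import all_boot all_order all_algebra.
From mathcomp Require Import all_classical all_reals.
From mathcomp Require Import topology normedtype derive.
From mathcomp Require Import complex.
From mathcomp Require Import ring lra.

Set Implicit Arguments.
Unset Strict Implicit.
Unset Printing Implicit Defensive.
Import Order.TTheory GRing.Theory Num.Theory.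
Import numFieldNormedType.Exports.
Local Open Scope classical_set_scope.
Local Open Scope ring_scope.

Lemma det_mx22 (K : comNzRingType) (A : 'M[K]_2) :
  \det A = A 0 0 * A 1 1 - A 0 1 * A 1 0.
Proof.
rewrite (expand_det_row _ 0) !big_ord_recl big_ord0 addr0 /cofactor !det_mx11.
rewrite !mxE /= expr0 expr1 mul1r mulN1r mulrN.
by congr (A _ _ * A _ _ - A _ _ * A _ _); apply: val_inj.
Qed.

Lemma mxtrace22 (K : comNzRingType) (A : 'M[K]_2) : \tr A = A 0 0 + A 1 1.
Proof. by rewrite /mxtrace !big_ord_recl big_ord0 addr0; congr (A _ _ + A _ _); apply: val_inj. Qed.

Lemma eigenvalue_mx22 (F : fieldType) (A : 'M[F]_2) a :
  eigenvalue A a = (a ^+ 2 - \tr A * a + \det A == 0).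
Proof.
have -> : a ^+ 2 - \tr A * a + \det A = \det (a%:M - A).
  by rewrite !det_mx22 mxtrace22 !mxE /=; ring.
apply/eigenvalueP/det0P => [[v Av v0] | [v v0 Av]]; exists v => //.
  by rewrite mulmxBr Av mul_mx_scalar subrr.
by apply/eqP; rewrite -mul_mx_scalar eq_sym -subr_eq0 -mulmxBr Av.
Qed.

Lemma purely_imaginary_eigenvalue (R : rcfType) (M : 'M[R]_2) :
  (exists2 z : R[i], eigenvalue (map_mx (fun x => x%:C%C) M) z & Re z = 0) <->
  \det M = 0 \/ (\tr M = 0 /\ 0 <= \det M).
Proof.
have eigE (y : R) : eigenvalue (map_mx (fun x => x%:C%C) M) (0 +i* y)%C =
    (\det M - y ^+ 2 == 0) && (y * \tr M == 0).
  rewrite eigenvalue_mx22 !det_mx22 !mxtrace22 !mxE eq_complex /=.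
  congr ((_ == 0) && _); first by ring.
  by rewrite -oppr_eq0; congr (_ == 0); ring.
split => [[[x y] eig] | H].
  rewrite -complexRe => /eqP; rewrite eq_complex /= => /andP[/eqP x0 _].
  move: eig; rewrite x0 eigE => /andP[/eqP dety /eqP tr0].
  have [y0|y0] := eqVneq y 0; first by left; move: dety; rewrite y0 expr0n subr0.
  right; split; first by move/eqP: tr0; rewrite mulf_eq0 (negbTE y0) => /eqP.
  by move/eqP: dety; rewrite subr_eq0 => /eqP ->; exact: sqr_ge0.
have [y [dety tr0]] : exists y, \det M = y ^+ 2 /\ y * \tr M = 0.
  case: H => [->|[-> d0]]; first by exists 0; rewrite expr0n mul0r.
  by exists (Num.sqrt (\det M)); rewrite sqr_sqrtr // mulr0.
by exists (0 +i* y)%C; rewrite ?eigE ?dety ?tr0 ?subrr ?eqxx // -complexRe.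
Qed.

Section SIRSJacobian.
Variable R : realType.
Implicit Types (p : 'rV[R]_8) (s i : R).

Definition fs_ds p s i := peps2 p - pb p - pbeta p - pgamma p - 2 * peps2 p * s
  + (peps1 p - peps2 p - plambda p) * i.
Definition fs_di p s i := - pgamma p + (peps1 p - peps2 p - plambda p) * s.
Definition fi_ds p s i := pbeta1 p + (plambda p - peps2 p) * i.
Definition fi_di p s i := peps2 p - peps1 p - palpha p - pb p
  + (plambda p - peps2 p) * s + 2 * (peps1 p - peps2 p) * i.

Definition jdet p s i := fs_ds p s i * fi_di p s i - fs_di p s i * fi_ds p s i.
Definition jtr p s i := fs_ds p s i + fi_di p s i.

Lemma jac_entries p s i :
  [/\ jac p s i 0 0 = fs_ds p s i, jac p s i 0 1 = fs_di p s i,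
      jac p s i 1 0 = fi_ds p s i & jac p s i 1 1 = fi_di p s i].
Proof.
by split; rewrite /jac mxE /vf /= derive1E; apply: derive_val; apply: is_derive_eq;
  rewrite /GRing.scale /= ?mulr1; rewrite /fs_ds /fs_di /fi_ds /fi_di; ring.
Qed.

Lemma det_jac p s i : \det (jac p s i) = jdet p s i.
Proof. by have [? ? ? ?] := jac_entries p s i; rewrite det_mx22; congr (_ * _ - _ * _). Qed.

Lemma trace_jac p s i : \tr (jac p s i) = jtr p s i.
Proof. by have [? ? ? ?] := jac_entries p s i; rewrite mxtrace22; congr (_ + _). Qed.

Lemma not_hyperbolicP p s i :
  ~ hyperbolic p s i <-> jdet p s i = 0 \/ (jtr p s i = 0 /\ 0 <= jdet p s i).
Proof.
rewrite -det_jac -trace_jac -purely_imaginary_eigenvalue /hyperbolic.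
split => [nh | [z eig z0] hyp]; last by move: (hyp z eig); rewrite z0 eqxx.
apply: contrapT => noz; apply: nh => z eig; apply/eqP => z0; apply: noz; by exists z.
Qed.
End SIRSJacobian.

(* Tube lemma: a cluster point [v] in [K] of the fibres of [A] over the neighbourhoods
   of [u] satisfies [A (u, v)]. *)
Lemma closed_fst_image {U V : topologicalType} (K : set V) (A : set (U * V)) :
  compact K -> closed A -> A `<=` setT `*` K -> closed (fst @` A).
Proof.
move=> cK cA AK u clu.
pose B (N : set U) := snd @` (A `&` N `*` setT).
have BF : ProperFilter (filter_from (nbhs u) B).
  apply: filter_from_proper; last first.
    by move=> N /clu [_ [[[x v] Axv <-] Nx]]; exists v, (x, v).
  apply: filter_from_filter; first by exists setT; exact: filterT.
  move=> N1 N2 N1u N2u; exists (N1 `&` N2); first exact: filterI.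
  by move=> _ [[x v] [Axv [[N1x N2x] _]] <-]; split; exists (x, v).
have [|v [Kv clv]] := cK _ BF.
  by exists setT; [exact: filterT | move=> _ [[x v] [/AK[_ Kv] _] <-]].
exists (u, v) => //; apply: cA => W [[N M] /= [Nu Mv] NMW].
have FN : filter_from (nbhs u) B (B N) by exists N.
have [_ [[[x v'] [Axv' [Nx _]] <-] Mv']] := clv _ _ FN Mv.
by exists (x, v'); split => //; apply: NMW.
Qed.

Lemma fst_continuous {U V : topologicalType} : continuous (@fst U V).
Proof. by move=> [x y]; exact: cvg_fst. Qed.

Lemma snd_continuous {U V : topologicalType} : continuous (@snd U V).
Proof. by move=> [x y]; exact: cvg_snd. Qed.

Section ContinuousFun.
Context {T : topologicalType} {R : realFieldType}.
Implicit Types f g : T -> R.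

Lemma continuous_add f g : continuous f -> continuous g -> continuous (fun x => f x + g x).
Proof. by move=> cf cg x; exact: (cvgD (cf x) (cg x)). Qed.

Lemma continuous_sub f g : continuous f -> continuous g -> continuous (fun x => f x - g x).
Proof. by move=> cf cg x; exact: (cvgB (cf x) (cg x)). Qed.

Lemma continuous_mul f g : continuous f -> continuous g -> continuous (fun x => f x * g x).
Proof. by move=> cf cg x; exact: (cvgM (cf x) (cg x)). Qed.

Lemma continuous_opp f : continuous f -> continuous (fun x => - f x).
Proof. by move=> cf x; exact: (cvgN (cf x)). Qed.

Lemma continuous_sqr f : continuous f -> continuous (fun x => f x ^+ 2).
Proof. by move=> cf; under eq_fun do rewrite expr2; exact: continuous_mul. Qed.

Lemma closed_zero_set f : continuous f -> closed [set x | f x = 0].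
Proof. by move=> cf; apply: ((continuous_closedP f).1 cf [set y | y = 0]); exact: closed_eq. Qed.

Lemma closed_nonneg_set f : continuous f -> closed [set x | 0 <= f x].
Proof. by move=> cf; apply: ((continuous_closedP f).1 cf [set y | 0 <= y]); exact: closed_ge. Qed.
End ContinuousFun.

Section Closedness.
Variable R : realType.
Implicit Types a : 'rV[R]_8 * (R * R).

Lemma closed_D1 : closed (@D1 R).
Proof.
have -> : @D1 R = [set x | 0 <= x.1] `&` ([set x | 0 <= x.2] `&` [set x | 0 <= 1 - (x.1 + x.2)]).
  by apply/seteqP; split => -[s i] /=; rewrite subr_ge0.
apply: closedI; first exact: (closed_nonneg_set fst_continuous).
apply: closedI; first exact: (closed_nonneg_set snd_continuous).
apply: closed_nonneg_set; apply: continuous_sub; first exact: cst_continuous.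
by apply: continuous_add; [exact: fst_continuous | exact: snd_continuous].
Qed.

Lemma compact_D1 : compact (@D1 R).
Proof.
apply: (@subclosed_compact _ (@D1 R) (`[0, 1] `*` `[0, 1])); first exact: closed_D1.
- by apply: compact_setX; exact: segment_compact.
- by move=> [s i] [/= s0 [i0 si1]]; split; rewrite /= in_itv /=; apply/andP; split => //; lra.
Qed.

Definition nonhyperbolic_rest_points : set ('rV[R]_8 * (R * R)) :=
  [set a : 'rV[R]_8 * (R * R) | D1 a.2 /\ rest_point a.1 a.2.1 a.2.2 /\
     (jdet a.1 a.2.1 a.2.2 = 0 \/ (jtr a.1 a.2.1 a.2.2 = 0 /\ 0 <= jdet a.1 a.2.1 a.2.2))].

Lemma continuous_param k : continuous (fun a : 'rV[R]_8 * (R * R) => a.1 0 k).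
Proof.
by move=> a; apply: (@continuous_comp _ _ _ fst (fun M : 'rV[R]_8 => M 0 k));
  [exact: fst_continuous | exact: coord_continuous].
Qed.

Lemma continuous_s : continuous (fun a : 'rV[R]_8 * (R * R) => a.2.1).
Proof.
by move=> a; apply: (@continuous_comp _ _ _ snd fst);
  [exact: snd_continuous | exact: fst_continuous].
Qed.

Lemma continuous_i : continuous (fun a : 'rV[R]_8 * (R * R) => a.2.2).
Proof. by move=> a; apply: (@continuous_comp _ _ _ snd snd); exact: snd_continuous. Qed.

Ltac continuity :=
  lazymatch goal with
  | |- continuous (fun x => @?f x + @?g x) => apply: continuous_add; continuity
  | |- continuous (fun x => @?f x * @?g x) => apply: continuous_mul; continuity
  | |- continuous (fun x => - @?f x) => apply: continuous_opp; continuity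
  | |- continuous (fun x => @?f x ^+ 2) => apply: continuous_sqr; continuity
  | |- continuous (fun x => fun_of_matrix x.1 _ _) => apply: continuous_param
  | |- continuous (fun x => x.2.1) => apply: continuous_s
  | |- continuous (fun x => x.2.2) => apply: continuous_i
  | |- _ => exact: cst_continuous
  end.

Lemma continuous_sirs :
  [/\ continuous (fun a : 'rV[R]_8 * (R * R) => fs a.1 a.2.1 a.2.2),
      continuous (fun a : 'rV[R]_8 * (R * R) => fi a.1 a.2.1 a.2.2),
      continuous (fun a : 'rV[R]_8 * (R * R) => jdet a.1 a.2.1 a.2.2) &
      continuous (fun a : 'rV[R]_8 * (R * R) => jtr a.1 a.2.1 a.2.2)].
Proof.
by split; rewrite /fs /fi /jdet /jtr /fs_ds /fs_di /fi_ds /fi_di /pb /pbeta /pbeta1 /pgamma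
  /peps1 /peps2 /plambda /palpha /prm; continuity.
Qed.

Lemma closed_nonhyperbolic_rest_points : closed nonhyperbolic_rest_points.
Proof.
have [cfs cfi cdet ctr] := continuous_sirs.
have -> : nonhyperbolic_rest_points = snd @^-1` @D1 R `&`
    ([set a | fs a.1 a.2.1 a.2.2 = 0] `&` [set a | fi a.1 a.2.1 a.2.2 = 0] `&`
     ([set a | jdet a.1 a.2.1 a.2.2 = 0] `|`
      [set a | jtr a.1 a.2.1 a.2.2 = 0] `&` [set a | 0 <= jdet a.1 a.2.1 a.2.2])).
  by apply/seteqP; split => a /= [? [[? ?] ?]].
apply: closedI; first exact: (continuous_closedP snd).1 snd_continuous _ closed_D1.
apply: closedI; first by apply: closedI; exact: closed_zero_set.
apply: closedU; first exact: closed_zero_set.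
by apply: closedI; [exact: closed_zero_set | exact: closed_nonneg_set].
Qed.

Lemma Omega1E : @Omega1 R = @Omega R `&` fst @` nonhyperbolic_rest_points.
Proof.
apply/seteqP; split => [p [Op [s [i [D [rp /not_hyperbolicP nh]]]]] | p [Op]].
  by split => //; exists (p, (s, i)).
move=> [[q [s i]] [D [rp /not_hyperbolicP nh]] /= qp]; subst p.
by split => //; exists s, i.
Qed.

Lemma rel_closed_Omega1 : rel_closed (@Omega R) (@Omega1 R).
Proof.
split; first by move=> p [].
exists (fst @` nonhyperbolic_rest_points); split; last exact: Omega1E.
apply: (closed_fst_image compact_D1 closed_nonhyperbolic_rest_points).
by move=> a [D _].
Qed.
End Closedness.

Section BoundedLipschitz.
Variables (R : realType) (X : Type) (dist : X -> X -> R) (S : set X).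
Implicit Types f g : X -> R.

Definition bdd_lipschitz f := exists M L : R,
  (forall x, S x -> `|f x| <= M) /\
  (forall x y, S x -> S y -> `|f x - f y| <= L * dist x y).

Lemma bdd_lipschitz_cst c : bdd_lipschitz (fun=> c).
Proof. by exists `|c|, 0; split => // x y _ _; rewrite subrr normr0 mul0r. Qed.

Lemma bdd_lipschitzD f g :
  bdd_lipschitz f -> bdd_lipschitz g -> bdd_lipschitz (fun x => f x + g x).
Proof.
move=> [M1 [L1 [fM fL]]] [M2 [L2 [gM gL]]]; exists (M1 + M2), (L1 + L2); split.
  by move=> x Sx; rewrite (le_trans (ler_normD _ _)) // lerD ?fM ?gM.
move=> x y Sx Sy; rewrite mulrDl opprD addrACA.
by rewrite (le_trans (ler_normD _ _)) // lerD ?fL ?gL.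
Qed.

Lemma bdd_lipschitzN f : bdd_lipschitz f -> bdd_lipschitz (fun x => - f x).
Proof.
move=> [M [L [fM fL]]]; exists M, L; split => [x Sx | x y Sx Sy]; first by rewrite normrN fM.
by rewrite -opprD normrN fL.
Qed.

Lemma bdd_lipschitzM f g :
  bdd_lipschitz f -> bdd_lipschitz g -> bdd_lipschitz (fun x => f x * g x).
Proof.
move=> [M1 [L1 [fM fL]]] [M2 [L2 [gM gL]]].
exists (M1 * M2), (M1 * L2 + M2 * L1); split => [x Sx | x y Sx Sy].
  by rewrite normrM ler_pM ?fM ?gM.
have -> : f x * g x - f y * g y = f x * (g x - g y) + g y * (f x - f y) by ring.
rewrite (le_trans (ler_normD _ _)) // !normrM mulrDl -!mulrA.
by rewrite lerD // ler_pM ?fM ?gM ?fL ?gL.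
Qed.

Lemma bdd_lipschitzV f (c : R) : 0 < c -> (forall x, S x -> c <= `|f x|) ->
  bdd_lipschitz f -> bdd_lipschitz (fun x => (f x)^-1).
Proof.
move=> c0 fc [M [L [_ fL]]]; exists c^-1, (L / (c * c)); split => [x Sx | x y Sx Sy].
  by rewrite normfV lef_pV2 ?posrE ?fc // (lt_le_trans c0) ?fc.
have fx0 : f x != 0 by rewrite -normr_gt0 (lt_le_trans c0) ?fc.
have fy0 : f y != 0 by rewrite -normr_gt0 (lt_le_trans c0) ?fc.
have -> : (f x)^-1 - (f y)^-1 = (f y - f x) * (f x * f y)^-1.
  by field; rewrite fx0 fy0.
rewrite normrM distrC mulrAC normfV normrM ler_pM ?invr_ge0 ?fL //.
  by rewrite mulr_ge0.
by rewrite lef_pV2 ?posrE ?mulr_gt0 ?ler_pM ?fc ?(ltW c0) // normr_gt0.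
Qed.

Lemma bdd_lipschitz_uniform (I : finType) (F : I -> X -> R) :
  (forall x y, 0 <= dist x y) -> (forall i, bdd_lipschitz (F i)) ->
  exists2 L, 0 <= L & forall i x y, S x -> S y -> `|F i x - F i y| <= L * dist x y.
Proof.
move=> dist0 FL.
have FL' i : exists L : R, forall x y, S x -> S y -> `|F i x - F i y| <= L * dist x y.
  by have [M [L [_ FiL]]] := FL i; exists L.
have [L LP] := choice FL'.
exists (\sum_i `|L i|) => [|i x y Sx Sy]; first exact: sumr_ge0.
rewrite (le_trans (LP i x y Sx Sy)) // ler_wpM2r // (le_trans (ler_norm _)) //.
by rewrite (bigD1 i) //= lerDl sumr_ge0.
Qed.
End BoundedLipschitz.

Section Concatenation.
Variables (T : eqType) (z : T) (t : nat -> seq T).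

(* Each block [t m] is preceded by the padding [z], so [concat_prefix N] has at least
   [N] entries and [concat_stream] enumerates every block. *)
Definition concat_prefix N := flatten [seq z :: t m | m <- iota 0 N].

Definition concat_stream k := nth z (concat_prefix k.+1) k.

Lemma concat_prefixS N : concat_prefix N.+1 = concat_prefix N ++ z :: t N.
Proof. by rewrite /concat_prefix -addn1 iotaD map_cat flatten_cat /= cats0. Qed.

Lemma concat_prefixD M d : exists r, concat_prefix (M + d) = concat_prefix M ++ r.
Proof.
elim: d => [|d [r IH]]; first by exists [::]; rewrite addn0 cats0.
by exists (r ++ z :: t (M + d)); rewrite addnS concat_prefixS IH catA.
Qed.

Lemma size_concat_prefix N : (N <= size (concat_prefix N))%N.
Proof.
elim: N => [|N IH] //; rewrite concat_prefixS size_cat /= addnS ltnS.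
exact: leq_trans IH (leq_addr _ _).
Qed.

Lemma nth_concat_prefix N k : (k < N)%N -> nth z (concat_prefix N) k = concat_stream k.
Proof.
move=> kN; have [r] := concat_prefixD k.+1 (N - k.+1); rewrite subnKC // => ->.
by rewrite nth_cat (leq_trans _ (size_concat_prefix _)).
Qed.

Lemma concat_stream_onto m x : x \in t m -> exists k, concat_stream k = x.
Proof.
move=> xt; have xp : x \in concat_prefix m.+1 by rewrite concat_prefixS mem_cat inE xt !orbT.
set k := index x (concat_prefix m.+1); exists k.
have [r e] := concat_prefixD m.+1 k.+1.
rewrite -(@nth_concat_prefix (m.+1 + k.+1)) ?ltn_addl // e.
by rewrite nth_cat index_mem xp nth_index.
Qed.

Lemma mem_concat_prefix N x : x \in concat_prefix N -> exists m, x \in z :: t m.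
Proof. by move=> /flattenP[_ /mapP[m _ ->]]; exists m. Qed.

Lemma concat_stream_mem k : exists m, concat_stream k \in z :: t m.
Proof. by apply: (@mem_concat_prefix k.+1); rewrite mem_nth ?size_concat_prefix. Qed.

Lemma sum_concat_stream (R : numDomainType) (f : T -> R) N :
  (forall m x, x \in z :: t m -> 0 <= f x) ->
  \sum_(k < N) f (concat_stream k) <= \sum_(0 <= m < N) \sum_(x <- z :: t m) f x.
Proof.
move=> f0.
have -> : \sum_(0 <= m < N) \sum_(x <- z :: t m) f x = \sum_(x <- concat_prefix N) f x.
  by rewrite big_flatten big_map /index_iota subn0.
rewrite (big_nth z) (big_cat_nat _ (size_concat_prefix N)) //= big_mkord.
rewrite (eq_bigr (fun k : 'I_N => f (nth z (concat_prefix N) k))) => [|k _]; last first.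
  by rewrite nth_concat_prefix.
rewrite lerDl big_nat_cond sumr_ge0 // => k /andP[/andP[_ ksz] _].
by have [m] := @mem_concat_prefix N (nth z (concat_prefix N) k) (mem_nth z ksz); apply: f0.
Qed.
End Concatenation.

Section NullSets.
Variable R : realType.
Implicit Types (A B : set 'rV[R]_8) (b : 'rV[R]_8 * 'rV[R]_8).

Definition box_volume b := \prod_(j < 8) (b.2 0 j - b.1 0 j).

Definition finitely_null A := forall eps : R, 0 < eps ->
  exists s : seq ('rV[R]_8 * 'rV[R]_8),
    [/\ forall b, b \in s -> forall j, b.1 0 j <= b.2 0 j,
        forall x, A x -> exists2 b, b \in s & box b.1 b.2 x &
        \sum_(b <- s) box_volume b <= eps].

Lemma finitely_nullU A B : finitely_null A -> finitely_null B -> finitely_null (A `|` B).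
Proof.
move=> nA nB eps eps0; have eps20 : 0 < eps / 2 by rewrite divr_gt0.
have [s [s_ok As s_vol]] := nA _ eps20; have [t [t_ok Bt t_vol]] := nB _ eps20.
exists (s ++ t); split.
- by move=> b; rewrite mem_cat => /orP[/s_ok | /t_ok].
- by move=> x [/As | /Bt] [b bst xb]; exists b; rewrite // mem_cat bst ?orbT.
- by rewrite big_cat (le_trans (lerD s_vol t_vol)) // [leRHS]splitr.
Qed.

Lemma sum_geometric (eps : R) N : \sum_(m < N) eps / 2 ^+ m.+1 = eps - eps / 2 ^+ N.
Proof.
elim: N => [|N IH]; first by rewrite big_ord0 expr0 divr1 subrr.
by rewrite big_ord_recr /= IH exprS; field; rewrite expf_neq0 // pnatr_eq0.
Qed.

Lemma lebesgue_null_bigcup (A : nat -> set 'rV[R]_8) :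
  (forall m, finitely_null (A m)) -> lebesgue_null (\bigcup_m A m).
Proof.
move=> nA eps eps0.
have pow2_gt0 m : 0 < 2 ^+ m.+1 :> R by rewrite exprn_gt0.
have [s sP] := choice (fun m => nA m _ (divr_gt0 eps0 (pow2_gt0 m))).
pose z : 'rV[R]_8 * 'rV[R]_8 := (0, 0).
have z_ok m b : b \in z :: s m -> forall j, b.1 0 j <= b.2 0 j.
  rewrite inE => /orP[/eqP -> j | ]; first by rewrite !mxE.
  by case: (sP m) => ok _ _; apply: ok.
pose bs := concat_stream z s.
exists (fun k => (bs k).1), (fun k => (bs k).2); split; [|split].
- by move=> k; have [m] := concat_stream_mem z s k; apply: z_ok.
- move=> x [m _ Amx]; have [_ cover _] := sP m; have [b bs_m xb] := cover x Amx.
  by have [k bk] := @concat_stream_onto _ z s m b bs_m; exists k; rewrite // /bs bk.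
- move=> N; have vol_ge0 m b : b \in z :: s m -> 0 <= box_volume b.
    by move=> /z_ok b_ok; apply: prodr_ge0 => j _; rewrite subr_ge0.
  apply: le_trans (@sum_concat_stream _ z s R box_volume N vol_ge0) _.
  apply: le_trans (_ : \sum_(0 <= m < N) eps / 2 ^+ m.+1 <= _).
    apply: ler_sum => m _; have [_ _ vol] := sP m.
    by rewrite big_cons {1}/box_volume big_ord_recl !mxE subrr mul0r add0r.
  by rewrite big_mkord sum_geometric gerBl divr_ge0 ?exprn_ge0 ?ltW.
Qed.

Lemma lebesgue_null_subset A B : A `<=` B -> lebesgue_null B -> lebesgue_null A.
Proof.
move=> AB nB eps eps0; have [a [c [ac [Bc vol]]]] := nB eps eps0.
by exists a, c; split => //; split => // x /AB /Bc.
Qed.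
End NullSets.

Section LipschitzImage.
Variables (R : realType) (d : nat).
Implicit Types x y : 'I_d -> R.

Definition l1_dist x y := \sum_j `|x j - y j|.

Definition in_cell (h : R) n (c : {ffun 'I_d -> 'I_n}) x :=
  forall j, (c j)%:R * h <= x j <= (c j).+1%:R * h.

Lemma exists_cell n (h : R) x : 0 < h -> (forall j, 0 <= x j <= n.+1%:R * h) ->
  exists c : {ffun 'I_d -> 'I_n.+1}, in_cell h c x.
Proof.
move=> h0 xW; exists [ffun j => inord (minn (Num.truncn (x j / h)) n)] => j.
rewrite ffunE inordK ?ltnS ?geq_minr //.
have [xj0 xjW] := andP (xW j).
set y := x j / h.
have y0 : 0 <= y by rewrite divr_ge0 // ltW.
have yn : y <= n.+1%:R by rewrite ler_pdivrMr.
have [t1 t2] := andP (truncn_itv y0).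
have -> : x j = y * h by rewrite mulfVK // lt0r_neq0.
rewrite !ler_pM2r //; apply/andP; split.
  by apply: le_trans t1; rewrite ler_nat geq_minl.
by case: leqP => _; [apply: ltW | ].
Qed.

Lemma l1_dist_cell n (h : R) (c : {ffun 'I_d -> 'I_n}) x y :
  in_cell h c x -> in_cell h c y -> l1_dist x y <= d%:R * h.
Proof.
move=> xc yc.
have -> : d%:R * h = \sum_(j < d) h by rewrite sumr_const card_ord mulr_natl.
apply: ler_sum => j _; have /andP[x1 x2] := xc j; have /andP[y1 y2] := yc j.
rewrite -natr1 mulrDl mul1r in x2 y2.
by rewrite ler_norml; apply/andP; split; lra.
Qed.

Lemma l1_dist_ge0 x y : 0 <= l1_dist x y.
Proof. exact: sumr_ge0. Qed.

Lemma grid_volume_le (eps L W : R) n : (d < 8)%N -> 0 < eps ->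
  (2 * L * d%:R * W) ^+ 8 / eps < n.+1%:R ->
  (2 * (L * (d%:R * (W / n.+1%:R)))) ^+ 8 * n.+1%:R ^+ d <= eps.
Proof.
move=> d8 eps0; set N : R := n.+1%:R; set a := 2 * L * d%:R * W => aN.
have N0 : 0 < N by rewrite ltr0n.
have -> : 2 * (L * (d%:R * (W / N))) = a / N.
  by rewrite /a; field; rewrite addrC natr1 pnatr_eq0.
have Nd : N ^+ d * N <= N ^+ 8 by rewrite -exprSr ler_weXn2l ?ler1n.
rewrite expr_div_n mulrAC ler_pdivrMr ?exprn_gt0 //.
apply: le_trans (_ : eps * N * N ^+ d <= _).
  by rewrite ler_pM2r ?exprn_gt0 // ltW // mulrC -ltr_pdivrMr.
by rewrite -mulrA ler_pM2l // mulrC.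
Qed.

(* The [(n+1)^d] grid cells of side [W/(n+1)] are mapped into cubes of side
   [2 L d W/(n+1)]; as [d < 8] their total volume is [O(1/n)]. *)
Lemma finitely_null_lipschitz_image (S : set ('I_d -> R)) (W : R)
    (Phi : ('I_d -> R) -> 'rV[R]_8) :
  (d < 8)%N -> 0 < W -> (forall x, S x -> forall j, 0 <= x j <= W) ->
  (forall k, bdd_lipschitz l1_dist S (fun x => Phi x 0 k)) -> finitely_null (Phi @` S).
Proof.
move=> d8 W0 SW PhiL eps eps0.
have [L L0 PhiL'] := bdd_lipschitz_uniform l1_dist_ge0 PhiL.
pose n := Num.truncn ((2 * L * d%:R * W) ^+ 8 / eps); pose N : R := n.+1%:R.
have N0 : 0 < N by rewrite ltr0n.
pose h := W / N; have h0 : 0 < h by rewrite divr_gt0.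
pose r := L * (d%:R * h); have r0 : 0 <= r := mulr_ge0 L0 (mulr_ge0 (ler0n _ _) (ltW h0)).
pose rep (c : {ffun 'I_d -> 'I_n.+1}) := match pselect (exists x, S x /\ in_cell h c x) with
  | left ex => projT1 (cid ex) | right _ => fun=> 0 end.
have repP c : (exists x, S x /\ in_cell h c x) -> S (rep c) /\ in_cell h c (rep c).
  by rewrite /rep; case: pselect => // ex _; case: cid.
pose box_of c := (Phi (rep c) - const_mx r, Phi (rep c) + const_mx r).
exists [seq box_of c | c <- enum {ffun 'I_d -> 'I_n.+1}]; split.
- by move=> _ /mapP[c _ ->] j; rewrite !mxE lerD2l; lra.
- move=> _ [x Sx <-].
  have xW j : 0 <= x j <= n.+1%:R * h by rewrite /h mulrC mulfVK ?lt0r_neq0 ?SW.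
  have [c xc] := exists_cell h0 xW.
  have [Srep repc] := repP c (ex_intro _ x (conj Sx xc)).
  exists (box_of c); first by apply: map_f; rewrite mem_enum.
  move=> k; rewrite !mxE /=.
  have : `|Phi x 0 k - Phi (rep c) 0 k| <= r.
    by rewrite (le_trans (PhiL' k x _ Sx Srep)) // ler_wpM2l // (l1_dist_cell xc).
  by rewrite ler_norml => /andP[lo hi]; apply/andP; split; lra.
- have vol c : box_volume (box_of c) = (2 * r) ^+ 8.
    rewrite /box_volume (eq_bigr (fun=> 2 * r)) ?prodr_const ?card_ord // => j _.
    by rewrite !mxE; ring.
  rewrite big_map big_enum /= (eq_bigr _ (fun c _ => vol c)) sumr_const card_ffun !card_ord.
  rewrite -(mulr_natr ((2 * r) ^+ 8)) natrX; apply: grid_volume_le => //.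
  exact: truncnS_gt.
Qed.
End LipschitzImage.

Section RestParametrization.
Variable R : realType.
Implicit Types (p : 'rV[R]_8) (s i : R).

Definition param (b beta b1 g e1 e2 l a : R) : 'rV[R]_8 :=
  \row_(k < 8) nth 0 [:: b; beta; b1; g; e1; e2; l; a] k.

Lemma paramE p :
  p = param (pb p) (pbeta p) (pbeta1 p) (pgamma p) (peps1 p) (peps2 p) (plambda p) (palpha p).
Proof.
apply/rowP => k; rewrite mxE /pb /pbeta /pbeta1 /pgamma /peps1 /peps2 /plambda /palpha /prm.
have -> : (0 : 'I_1) = ord0 by apply: val_inj.
by case: k => [[|[|[|[|[|[|[|[|//]]]]]]]] k8] /=; congr (p _ _); apply: val_inj; rewrite /= inordK.
Qed.

Definition beta_rest (b g e1 e2 l s i : R) :=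
  (b + g - g * i) / s + e2 - b - g - e2 * s + (e1 - e2 - l) * i.
Definition alpha_rest (b b1 e1 e2 l s i : R) :=
  b1 * s / i + e2 - e1 - b + (l - e2) * s + (e1 - e2) * i.

Definition rest_param (b b1 g e1 e2 l s i : R) :=
  param b (beta_rest b g e1 e2 l s i) b1 g e1 e2 l (alpha_rest b b1 e1 e2 l s i).

Definition fs_ds_rest (b g e2 s i : R) := - ((b + g - g * i) / s) - e2 * s.
Definition det_slope (b b1 g e2 l s i : R) := fs_ds_rest b g e2 s i * i - s * (b1 + (l - e2) * i).
Definition det_offset (b b1 g e2 l s i : R) :=
  fs_ds_rest b g e2 s i * (- (b1 * s / i) - e2 * i) + (g + (e2 + l) * s) * (b1 + (l - e2) * i).

Definition eps1_trace (b b1 g e2 s i : R) := e2 + (b1 * s / i - fs_ds_rest b g e2 s i) / i.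
Definition eps1_det (b b1 g e2 l s i : R) := - det_offset b b1 g e2 l s i / det_slope b b1 g e2 l s i.
Definition lambda_det (b b1 g e2 s i : R) := e2 + (fs_ds_rest b g e2 s i * i - s * b1) / s / i.

Section AtRestPoint.
Variables (p : 'rV[R]_8) (s i : R).
Hypotheses (s0 : s != 0) (i0 : i != 0) (rest : rest_point p s i).

Local Notation b := (pb p).
Local Notation b1 := (pbeta1 p).
Local Notation g := (pgamma p).
Local Notation e1 := (peps1 p).
Local Notation e2 := (peps2 p).
Local Notation l := (plambda p).

Lemma pbeta_rest : pbeta p = beta_rest b g e1 e2 l s i.
Proof.
have [fs0 _] := rest; have : fs p s i = s * (beta_rest b g e1 e2 l s i - pbeta p).
  by rewrite /fs /beta_rest; field.
by rewrite fs0 => /esym/eqP; rewrite mulf_eq0 (negbTE s0) subr_eq0 eq_sym => /eqP.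
Qed.

Lemma palpha_rest : palpha p = alpha_rest b b1 e1 e2 l s i.
Proof.
have [_ fi0] := rest; have : fi p s i = i * (alpha_rest b b1 e1 e2 l s i - palpha p).
  by rewrite /fi /alpha_rest; field.
by rewrite fi0 => /esym/eqP; rewrite mulf_eq0 (negbTE i0) subr_eq0 eq_sym => /eqP.
Qed.

Lemma rest_paramE : p = rest_param b b1 g e1 e2 l s i.
Proof. by rewrite {1}[p]paramE pbeta_rest palpha_rest. Qed.

Lemma jtr_rest : jtr p s i = i * (e1 - eps1_trace b b1 g e2 s i).
Proof.
rewrite /jtr /fs_ds /fi_di pbeta_rest palpha_rest /beta_rest /alpha_rest /eps1_trace /fs_ds_rest.
by field; rewrite i0 s0.
Qed.

Lemma jdet_rest : jdet p s i = det_offset b b1 g e2 l s i + det_slope b b1 g e2 l s i * e1.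
Proof.
rewrite /jdet /fs_ds /fi_di /fs_di /fi_ds pbeta_rest palpha_rest /beta_rest /alpha_rest.
by rewrite /det_offset /det_slope /fs_ds_rest; field; rewrite i0 s0.
Qed.

Lemma det_slope_rest : det_slope b b1 g e2 l s i = s * i * (lambda_det b b1 g e2 s i - l).
Proof. by rewrite /det_slope /lambda_det; field; rewrite i0 s0. Qed.
End AtRestPoint.

Lemma rest_point_interior p s i : Omega p -> D1 (s, i) -> rest_point p s i -> 0 < s /\ 0 < i.
Proof.
move=> [pos _] [/= s0 [i0 si1]] [fs0 fi0].
have [b0 b10 g0] : [/\ 0 < pb p, 0 < pbeta1 p & 0 < pgamma p] by split; apply: pos.
have i_pos : 0 < i.
  rewrite lt_neqAle i0 andbT eq_sym; apply/eqP => i_0.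
  have /eqP : pbeta1 p * s = 0 by rewrite -fi0 /fi i_0; ring.
  rewrite mulf_eq0 gt_eqF //= => /eqP s_0.
  have : pb p + pgamma p = 0 by rewrite -fs0 /fs s_0 i_0; ring.
  lra.
split => //; rewrite lt_neqAle s0 andbT eq_sym; apply/eqP => s_0.
have : pb p + pgamma p * (1 - i) = 0 by rewrite -fs0 /fs s_0; ring.
have : 0 <= pgamma p * (1 - i) by apply: mulr_ge0; [exact: ltW | lra].
lra.
Qed.
End RestParametrization.

Lemma exists_nat_bound (R : realType) (l : seq R) :
  exists m : nat, forall y, y \in l -> y <= m.+1%:R.
Proof.
elim: l => [|y l [m IH]]; first by exists 0%N.
exists (maxn m (Num.truncn y)) => x; rewrite inE => /orP[/eqP -> | /IH xm].
  by rewrite ltW // (lt_le_trans (truncnS_gt y)) // ler_nat ltnS leq_maxr.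
by rewrite (le_trans xm) // ler_nat ltnS leq_maxl.
Qed.

Section Cover.
Variable R : realType.

Definition app7 {T : Type} (F : R -> R -> R -> R -> R -> R -> R -> T) (x : 'I_7 -> R) : T :=
  F (x (inord 0)) (x (inord 1)) (x (inord 2)) (x (inord 3)) (x (inord 4)) (x (inord 5))
    (x (inord 6)).

Lemma app7_seq {T : Type} (F : R -> R -> R -> R -> R -> R -> R -> T) (a0 a1 a2 a3 a4 a5 a6 : R) :
  app7 F (fun j => nth 0 [:: a0; a1; a2; a3; a4; a5; a6] j) = F a0 a1 a2 a3 a4 a5 a6.
Proof. by rewrite /app7 !inordK. Qed.

(* Coordinates 5 and 6 are s and i; bounding them below keeps 1/s and 1/i Lipschitz. *)
Definition in_box7 (m : nat) (x : 'I_7 -> R) :=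
  [/\ forall j, 0 <= x j <= m.+1%:R, m.+1%:R^-1 <= x (inord 5) & m.+1%:R^-1 <= x (inord 6)].

Definition in_det_box (m : nat) (x : 'I_7 -> R) :=
  in_box7 m x /\ m.+1%:R^-1 <= `|app7 (@det_slope R) x|.

Definition trace_param := app7 (fun b b1 g e2 l s i =>
  rest_param b b1 g (eps1_trace b b1 g e2 s i) e2 l s i).

Definition det_param := app7 (fun b b1 g e2 l s i =>
  rest_param b b1 g (eps1_det b b1 g e2 l s i) e2 l s i).

Definition degenerate_det_param := app7 (fun b b1 g e1 e2 s i =>
  rest_param b b1 g e1 e2 (lambda_det b b1 g e2 s i) s i).

Lemma Omega1_cover p : Omega1 p -> exists m,
  (trace_param @` in_box7 m `|` det_param @` in_det_box m `|`
   degenerate_det_param @` in_box7 m) p.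
Proof.
move=> [Op [s [i [D1si [rest /not_hyperbolicP nh]]]]].
have [s0 i0] := rest_point_interior Op D1si rest.
have pos k : 0 < prm p k by case: Op => pos _; exact: pos.
set c1 := det_slope (pb p) (pbeta1 p) (pgamma p) (peps2 p) (plambda p) s i.
set L := [:: pb p; pbeta1 p; pgamma p; peps1 p; peps2 p; plambda p; s; i; s^-1; i^-1; `|c1|^-1].
have [m mP] := exists_nat_bound L.
have inv_bound y : 0 < y -> y^-1 \in L -> m.+1%:R^-1 <= y.
  by move=> y0 /mP yL; rewrite -[leRHS]invrK lef_pV2 ?posrE ?invr_gt0.
have box a3 a4 : 0 < a3 -> 0 < a4 -> a3 \in L -> a4 \in L ->
    in_box7 m (fun j => nth 0 [:: pb p; pbeta1 p; pgamma p; a3; a4; s; i] j).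
  move=> a30 a40 a3L a4L; split; rewrite ?inordK ?inv_bound ?inE ?eqxx ?orbT //.
  move=> [[|[|[|[|[|[|[|//]]]]]]] _] /=; apply/andP; split;
    by [apply: ltW => //; exact: pos | apply: mP; rewrite // /L !inE eqxx ?orbT].
have [sn0 in0] := (lt0r_neq0 s0, lt0r_neq0 i0).
have p_rest := rest_paramE sn0 in0 rest.
exists m; case: nh => [det0 | [tr0 _]].
- have [c1_0 | c1_neq0] := eqVneq c1 0.
    right; exists (fun j => nth 0 [:: pb p; pbeta1 p; pgamma p; peps1 p; peps2 p; s; i] j).
      by apply: box; first [exact: pos | rewrite /L !inE eqxx ?orbT].
    rewrite /degenerate_det_param app7_seq [in RHS]p_rest; congr rest_param.
    move/eqP: c1_0; rewrite /c1 det_slope_rest // !mulf_eq0 (negbTE sn0) (negbTE in0) /=.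
    by rewrite subr_eq0 => /eqP.
  left; right; exists (fun j => nth 0 [:: pb p; pbeta1 p; pgamma p; peps2 p; plambda p; s; i] j).
    split; first by apply: box; first [exact: pos | rewrite /L !inE eqxx ?orbT].
    by rewrite app7_seq inv_bound ?normr_gt0 // /L !inE eqxx ?orbT.
  rewrite /det_param app7_seq [in RHS]p_rest; congr rest_param.
  move: det0; rewrite jdet_rest // => /eqP; rewrite addr_eq0 => /eqP off.
  by rewrite /eps1_det off -/c1 opprK mulrC mulKf.
left; left; exists (fun j => nth 0 [:: pb p; pbeta1 p; pgamma p; peps2 p; plambda p; s; i] j).
  by apply: box; first [exact: pos | rewrite /L !inE eqxx ?orbT].
rewrite /trace_param app7_seq [in RHS]p_rest; congr rest_param.
by move/eqP: tr0; rewrite jtr_rest // mulf_eq0 (negbTE in0) /= subr_eq0 => /eqP ->.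
Qed.
End Cover.

Ltac bdd_lipschitz_tac leaf :=
  lazymatch goal with
  | |- bdd_lipschitz _ _ (fun x => @?f x + @?g x) =>
      apply: bdd_lipschitzD; bdd_lipschitz_tac leaf
  | |- bdd_lipschitz _ _ (fun x => @?f x * @?g x) =>
      apply: bdd_lipschitzM; bdd_lipschitz_tac leaf
  | |- bdd_lipschitz _ _ (fun x => - @?f x) => apply: bdd_lipschitzN; bdd_lipschitz_tac leaf
  | |- _ => first [exact: bdd_lipschitz_cst | leaf]
  end.

Section RestParamLipschitz.
Variables (R : realType) (X : Type) (dist : X -> X -> R) (S : set X).
Local Notation bl := (bdd_lipschitz dist S).
Variables (b b1 g e1 e2 l s i : X -> R).
Hypotheses (bl_b : bl b) (bl_b1 : bl b1) (bl_g : bl g) (bl_e1 : bl e1) (bl_e2 : bl e2)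
  (bl_l : bl l) (bl_s : bl s) (bl_i : bl i)
  (bl_Vs : bl (fun x => (s x)^-1)) (bl_Vi : bl (fun x => (i x)^-1)).

Lemma bdd_lipschitz_rest_param k :
  bl (fun x => rest_param (b x) (b1 x) (g x) (e1 x) (e2 x) (l x) (s x) (i x) 0 k).
Proof.
rewrite /rest_param /param.
by case: k => [[|[|[|[|[|[|[|[|//]]]]]]]] k8]; under eq_fun do rewrite mxE /=;
  rewrite /beta_rest /alpha_rest; bdd_lipschitz_tac assumption.
Qed.
End RestParamLipschitz.

Section NullImages.
Variables (R : realType) (m : nat) (S : set ('I_7 -> R)).
Hypothesis S_box : S `<=` in_box7 m.
Local Notation bl := (bdd_lipschitz (@l1_dist R 7) S).

Lemma bdd_lipschitz_coord k : bl (fun x => x k).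
Proof.
exists m.+1%:R, 1; split => [x /S_box[xm _ _] | x y _ _].
  by have /andP[xk0 xkm] := xm k; rewrite ger0_norm.
by rewrite mul1r /l1_dist (bigD1 k) //= lerDl sumr_ge0.
Qed.

Lemma bdd_lipschitz_inv_coord k : (forall x, S x -> m.+1%:R^-1 <= x k) ->
  bl (fun x => (x k)^-1).
Proof.
move=> lb; apply: (@bdd_lipschitzV _ _ _ _ _ m.+1%:R^-1) => [|x Sx|].
- by rewrite invr_gt0 ltr0n.
- exact: le_trans (lb x Sx) (ler_norm _).
- exact: bdd_lipschitz_coord.
Qed.

Ltac box_leaf := first [exact: bdd_lipschitz_coord
  | apply: bdd_lipschitz_inv_coord => x /S_box[_ ? ?] //].

Lemma finitely_null_box_image (Phi : ('I_7 -> R) -> 'rV[R]_8) :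
  (forall k, bl (fun x => Phi x 0 k)) -> finitely_null (Phi @` S).
Proof.
by apply: (finitely_null_lipschitz_image (W := m.+1%:R)) => // x /S_box[].
Qed.

Lemma finitely_null_trace_image : finitely_null (@trace_param R @` S).
Proof.
apply: finitely_null_box_image => k; apply: bdd_lipschitz_rest_param; try box_leaf.
rewrite /eps1_trace /fs_ds_rest; bdd_lipschitz_tac box_leaf.
Qed.

Lemma finitely_null_degenerate_det_image : finitely_null (@degenerate_det_param R @` S).
Proof.
apply: finitely_null_box_image => k; apply: bdd_lipschitz_rest_param; try box_leaf.
rewrite /lambda_det /fs_ds_rest; bdd_lipschitz_tac box_leaf.
Qed.

Lemma finitely_null_det_image :
  (forall x, S x -> m.+1%:R^-1 <= `|app7 (@det_slope R) x|) -> finitely_null (@det_param R @` S).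
Proof.
move=> slope_lb; have bl_slope : bl (app7 (@det_slope R)).
  by rewrite /app7 /det_slope /fs_ds_rest; bdd_lipschitz_tac box_leaf.
have bl_inv_slope : bl (fun x => (app7 (@det_slope R) x)^-1).
  by apply: (bdd_lipschitzV _ slope_lb bl_slope); rewrite invr_gt0 ltr0n.
apply: finitely_null_box_image => k; apply: bdd_lipschitz_rest_param; try box_leaf.
rewrite /eps1_det /det_offset /fs_ds_rest; bdd_lipschitz_tac ltac:(first [box_leaf | assumption]).
Qed.

End NullImages.

Section Conclusion.
Variable R : realType.

Lemma lebesgue_null_Omega1 : lebesgue_null (@Omega1 R).
Proof.
apply: (@lebesgue_null_subset _ _ (\bigcup_m (@trace_param R @` in_box7 m `|`
  @det_param R @` in_det_box m `|` @degenerate_det_param R @` in_box7 m))).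
  by move=> p /Omega1_cover[m pm]; exists m.
apply: lebesgue_null_bigcup => m; apply: finitely_nullU; first apply: finitely_nullU.
- exact: (@finitely_null_trace_image _ m).
- by apply: (@finitely_null_det_image _ m) => [x [] | x []].
- exact: (@finitely_null_degenerate_det_image _ m).
Qed.

Lemma prm_param (a0 a1 a2 a3 a4 a5 a6 a7 : R) k : (k < 8)%N ->
  prm (param a0 a1 a2 a3 a4 a5 a6 a7) k = nth 0 [:: a0; a1; a2; a3; a4; a5; a6; a7] k.
Proof. by move=> k8; rewrite /prm mxE inordK. Qed.

Definition param_example : 'rV[R]_8 :=
  param (1 / 10) (51 / 10) (1 / 10) (1 / 10) (32 / 5) 8 4 (1 / 5).

Lemma Omega1_example : Omega1 param_example.
Proof.
split.
  split; first by move=> k; rewrite mxE; case: k => [[|[|[|[|[|[|[|[|//]]]]]]]] _] /=; lra.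
  by rewrite /pbeta /pbeta1 !prm_param //=; lra.
exists (1 / 4), (1 / 4); split; first by rewrite /D1 /=; lra.
split.
  by rewrite /rest_point /fs /fi /pb /pbeta /pbeta1 /pgamma /peps1 /peps2 /plambda /palpha
    !prm_param //=; split; field.
apply/not_hyperbolicP; left.
by rewrite /jdet /fs_ds /fs_di /fi_ds /fi_di /pb /pbeta /pbeta1 /pgamma /peps1 /peps2 /plambda
  /palpha !prm_param //=; field.
Qed.
End Conclusion.

Theorem proposition4p4 (R : realType) :
  rel_closed (@Omega R) (@Omega1 R) /\
  (@Omega1 R) !=set0 /\
  lebesgue_null (@Omega1 R).
Proof.
split; first exact: rel_closed_Omega1.
split; first by exists (param_example R); exact: Omega1_example.
exact: lebesgue_null_Omega1.
Qed.
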